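(* Let $(E,p,X)$ and $(F,q,Y)$ be étalé spaces over Boolean spaces and let $\varphi\colon(E,p,X)\to(F,q,Y)$ be a proper continuous relational covering morphism with underlying map $\overline{\varphi}\colon X\to Y$. Then the map $\hat\varphi\colon F^{\ast}\to E^{\ast}$, $x\mapsto\varphi^{-1}(x)$, is well defined and, together with the map $Y^{\ast}\to X^{\ast}$, $U\mapsto\overline{\varphi}^{-1}(U)$, is a morphism of Boolean sets from $\widetilde q\colon F^{\ast}\to Y^{\ast}$ to $\widetilde p\colon E^{\ast}\to X^{\ast}$.
   Context: A Boolean space is a Hausdorff space with a basis of compact-open sets. An étalé space $(E,p,X)$: surjective local homeomorphism $p\colon E\to X$. A local section is an open $A\subseteq E$ on which $p$ is injective. For an étalé space $(E,p,X)$, $X^{\ast}$ is the Boolean algebra of compact-open subsets of $X$, $E^{\ast}$ the set of compact-open local sections, $\widetilde p(C)=p(C)$, and restrictions are $C|^A_B=C\cap p^{-1}(B)$ for compact-open $A\supseteq B$ and $p(C)=A$; this is a Boolean set. A relational morphism $\varphi\colon(E,p,X)\to(F,q,Y)$: a map $\varphi\colon E\to\mathsf P(F)$ and a map $\overline{\varphi}\colon X\to Y$ with $\varphi(e)\subseteq q^{-1}(\overline{\varphi}(p(e)))$. Locally injective: $p(e)=p(e')$ and $\varphi(e)\cap\varphi(e')\neq\emptyset$ imply $e=e'$. Locally surjective: if $y\in F$ and $q(y)=\overline{\varphi}(u)$, $u\in X$, then some $e$ with $p(e)=u$ has $y\in\varphi(e)$. Relational covering morphism: both. $\varphi^{-1}(A)=\{e:\varphi(e)\cap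 A\neq\emptyset\}$; continuous/proper: preimages of open/compact sets are open/compact. Boolean sets and their morphisms: a ''Boolean algebra'' is a generalized Boolean algebra (relatively complemented distributive lattice with $0$). A Boolean set is a presheaf of sets $p\colon X\to B$ over a Boolean algebra (pairwise disjoint $X_e$, restrictions $x|^e_f$ for $e\ge f$, functorial) with all $X_e\ne\emptyset$, such that under the order $x\le y$ iff $p(x)\le p(y)$ and $x=y|^{p(y)}_{p(x)}$ there is a least element $0$, any $x,y$ with $x\wedge y$ existing and $p(x\wedge y)=p(x)\wedge p(y)$ have a join, and $p(x)=0\Rightarrow x=0$. A morphism of Boolean sets $(X,p,B_1)\to(Y,q,B_2)$ is $\psi\colon X\to Y$ with a Boolean algebra morphism $\overline{\psi}\colon B_1\to B_2$ such that $q\psi=\overline{\psi}p$ and $\psi(x|^a_b)=\psi(x)|^{\overline{\psi}(a)}_{\overline{\psi}(b)}$. *)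

From HB Require Import structures.
From mathcomp Require Import all_boot all_order.
From mathcomp Require Import all_classical all_reals all_analysis.
Set Implicit Arguments. Unset Strict Implicit. Unset Printing Implicit Defensive.
Local Open Scope classical_set_scope.

Definition boolean_space (X : topologicalType) : Prop :=
  hausdorff_space X /\
  (forall (A : set X) (x : X), open A -> A x ->
     exists B : set X, [/\ open B, compact B, B x & B `<=` A]).

(* p is a local homeomorphism: continuous, and every point has an open
   neighbourhood mapped injectively onto an open set, with the restriction
   an open map (hence a homeomorphism onto its open image). *)
Definition local_homeomorphism (E X : topologicalType) (p : E -> X) : Prop :=
  continuous p /\
  (forall e : E, exists U : set E,
     [/\ open U, U e, open (p @` U), {in U &, injective p} &
         (forall V : set E, open V -> V `<=` U -> open (p @` V))]).

Definition etale (E X : topologicalType) (p : E -> X) : Prop :=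
  (forall x : X, exists e : E, p e = x) /\ local_homeomorphism p.

Definition local_section (E X : topologicalType) (p : E -> X) (A : set E) :=
  open A /\ {in A &, injective p}.

Definition cpt_open (X : topologicalType) (U : set X) : Prop :=
  open U /\ compact U.

Definition sections_star (E X : topologicalType) (p : E -> X) (C : set E) :=
  compact C /\ local_section p C.

Definition restr (E X : topologicalType) (p : E -> X) (B : set X) (C : set E)
  : set E := C `&` p @^-1` B.

Definition relational_morphism (E X F Y : topologicalType) (p : E -> X)
  (q : F -> Y) (phi : E -> set F) (phibar : X -> Y) : Prop :=
  forall e : E, phi e `<=` q @^-1` [set phibar (p e)].

Definition rel_locally_injective (E X F : topologicalType) (p : E -> X)
  (phi : E -> set F) : Prop :=
  forall e e' : E, p e = p e' -> phi e `&` phi e' !=set0 -> e = e'.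

Definition rel_locally_surjective (E X F Y : topologicalType) (p : E -> X)
  (q : F -> Y) (phi : E -> set F) (phibar : X -> Y) : Prop :=
  forall (y : F) (u : X), q y = phibar u ->
    exists e : E, p e = u /\ phi e y.

Definition rel_preimage (E F : Type) (phi : E -> set F) (A : set F) : set E :=
  [set e | phi e `&` A !=set0].

Definition rel_continuous (E F : topologicalType) (phi : E -> set F) : Prop :=
  forall A : set F, open A -> open (rel_preimage phi A).

Definition rel_proper (E F : topologicalType) (phi : E -> set F) : Prop :=
  forall A : set F, compact A -> compact (rel_preimage phi A).

(* Morphism of generalized Boolean algebras Y^* -> X^* (the operations in
   X^*, Y^* are the set operations: 0 = empty, join = union, meet =
   intersection, relative complement = difference). *)
Definition gba_morphism (X Y : topologicalType) (h : set Y -> set X) : Prop :=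
  [/\ h set0 = set0,
      (forall U V, cpt_open U -> cpt_open V -> h (U `|` V) = h U `|` h V),
      (forall U V, cpt_open U -> cpt_open V -> h (U `&` V) = h U `&` h V) &
      (forall U V, cpt_open U -> cpt_open V -> h (U `\` V) = h U `\` h V)].

Definition boolset_morphism (E X F Y : topologicalType) (p : E -> X)
  (q : F -> Y) (psi : set F -> set E) (psibar : set Y -> set X) : Prop :=
  [/\ (forall x, sections_star q x -> sections_star p (psi x)),
      (forall U, cpt_open U -> cpt_open (psibar U)),
      gba_morphism psibar,
      (forall x, sections_star q x -> p @` (psi x) = psibar (q @` x)) &
      (forall (A B : set Y) (x : set F),
         cpt_open A -> cpt_open B -> B `<=` A ->
         sections_star q x -> q @` x = A ->
         psi (restr q B x) = restr p (psibar B) (psi x))].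

From mathcomp Require Import all_boot all_order.
From mathcomp Require Import all_classical all_reals all_analysis.
Local Open Scope classical_set_scope.

(* The key identity is phibar^-1 (q S) = p (phi^-1 S) for every S ⊆ F, which
   follows from phi being a locally surjective relational morphism.  With
   S = q^-1 W it shows that phibar is continuous (p is an open map and phi is
   continuous).  With S the lift along a local section of q of a compact-open
   neighbourhood of y, it shows that every y has a neighbourhood whose
   phibar-preimage is compact (phi is proper, p is continuous); together with
   continuity this makes phibar proper.  The remaining clauses are pointwise
   computations, local injectivity of phi giving injectivity of p on
   phi^-1 of a section. *)

Lemma local_homeomorphism_open {E X : topologicalType} {p : E -> X} :
  local_homeomorphism p -> forall W, open W -> open (p @` W).
Proof.
move=> [_ lh] W oW; rewrite openE => _ [w Ww <-].
have [U [oU Uw _ _ opm]] := lh w.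
have oWU : open (p @` (W `&` U)) by apply: opm; [exact: openI | exact: subIsetr].
have : nbhs (p w) (p @` (W `&` U)) by apply: open_nbhs_nbhs; split=> //; exists w.
by apply: filterS => _ [z [Wz _] <-]; exists z.
Qed.

Lemma compact_lift {F Y : topologicalType} {q : F -> Y} {V : set F} {B : set Y} :
  open V -> {in V &, injective q} ->
  (forall W : set F, open W -> W `<=` V -> open (q @` W)) ->
  compact B -> B `<=` q @` V -> compact (V `&` q @^-1` B).
Proof.
move=> oV injV opm cB sBV G PG GVB.
have GB : G (q @^-1` B) by apply: filterS GVB => z [].
have [b [Bb clb]] := cB (q @ G) _ GB.
have [s Vs qs] := sBV b Bb.
exists s; split; first by split=> //=; rewrite qs.
move=> A N GA; rewrite nbhsE => -[W [oW Ws] sWN].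
have nbb : nbhs b (q @` (W `&` V)).
  apply: open_nbhs_nbhs; split; last by exists s.
  by apply: opm; [exact: openI | exact: subIsetr].
have GqA : G (q @^-1` (q @` (A `&` (V `&` q @^-1` B)))).
  by apply: filterS (filterI GA GVB) => z Hz; exists z.
have [_ [[a [Aa [Va _]] <-] [w [Ww Vw] qw]]] := clb _ _ GqA nbb.
have aw : a = w by apply: injV; rewrite ?in_setE // qw.
by exists a; split=> //; apply: sWN; rewrite aw.
Qed.

Lemma compact_preimage_locally_compact {X Y : topologicalType} {f : X -> Y}
    {U : set Y} :
  hausdorff_space Y -> continuous f ->
  (forall y : Y, exists2 N, nbhs y N & compact (f @^-1` N)) ->
  compact U -> compact (f @^-1` U).
Proof.
move=> hY fc lc cU; rewrite compact_ultra => G UG GU.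
have [y [_ cly]] := cU (f @ G) _ GU.
have [N Ny cN] := lc y.
have GN : G (f @^-1` N).
  have [// | GnN] := in_ultra_setVsetC (f @^-1` N) UG.
  by have [z []] := cly (~` N) _ GnN Ny.
move: cN; rewrite compact_ultra => /(_ G UG GN) [x [_ Gx]].
exists x; split=> //.
have clU : closed (f @^-1` U).
  exact: (continuous_closedP f).1 fc _ (compact_closed hY cU).
by apply: clU => M Mx; apply: filter_ex (filterI GU (Gx _ Mx)).
Qed.

Section RelationalCovering.
Context {E X F Y : topologicalType} {p : E -> X} {q : F -> Y}.
Context {phi : E -> set F} {phibar : X -> Y}.
Hypothesis phi_rel : relational_morphism p q phi phibar.

Lemma rel_preimage_restr (B : set Y) (x : set F) :
  rel_preimage phi (restr q B x) =
  restr p (phibar @^-1` B) (rel_preimage phi x).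
Proof.
apply/seteqP; split.
- move=> e [y [ey [xy By]]]; split; first by exists y.
  by rewrite /preimage /= -(phi_rel _ _ ey).
- move=> e [[y [ey xy]] Bpe]; exists y; split=> //; split=> //.
  by rewrite /preimage /= (phi_rel _ _ ey).
Qed.

Hypothesis phi_linj : rel_locally_injective p phi.

Lemma sections_star_rel_preimage (x : set F) :
  rel_continuous phi -> rel_proper phi ->
  sections_star q x -> sections_star p (rel_preimage phi x).
Proof.
move=> rc rp [cx [ox injx]]; split; first exact: rp.
split; first exact: rc.
move=> e e'; rewrite !in_setE => -[y [ey xy]] [y' [ey' xy']] pee.
have yy' : y = y'.
  by apply: injx; rewrite ?in_setE // (phi_rel _ _ ey) (phi_rel _ _ ey') pee.
by apply: phi_linj pee _; exists y; split=> //; rewrite yy'.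
Qed.

Hypothesis phi_lsurj : rel_locally_surjective p q phi phibar.

Lemma preimage_image_rel (S : set F) :
  phibar @^-1` (q @` S) = p @` rel_preimage phi S.
Proof.
apply/seteqP; split.
- move=> u [s Ss qs]; have [e [pe es]] := phi_lsurj _ _ qs.
  by exists e => //; exists s.
- by move=> _ [e [s [es Ss]] <-]; exists s => //; exact: phi_rel _ _ es.
Qed.

Hypotheses (p_etale : etale p) (q_etale : etale q).
Hypotheses (phi_cont : rel_continuous phi) (phi_proper : rel_proper phi).

Lemma rel_covering_base_continuous : continuous phibar.
Proof.
apply/continuousP => W oW.
have [qsurj [qc _]] := q_etale.
rewrite -[W](image_preimage (f := q)); last first.
  by apply/seteqP; split=> // y _; have [f <-] := qsurj y; exists f.
rewrite preimage_image_rel.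
apply: local_homeomorphism_open p_etale.2 _ _; apply: phi_cont.
exact: (continuousP _).1 qc W oW.
Qed.

Lemma rel_covering_base_locally_proper (y : Y) :
  boolean_space Y -> exists2 N, nbhs y N & compact (phibar @^-1` N).
Proof.
move=> [_ bY]; have [qsurj [_ qlh]] := q_etale.
have [f qf] := qsurj y.
have [V [oV Vf oqV injV opmV]] := qlh f.
have [B [oB cB By sBV]] := bY (q @` V) y oqV (ex_intro2 _ _ f Vf qf).
exists B; first exact: open_nbhs_nbhs.
have -> : B = q @` (V `&` q @^-1` B).
  apply/seteqP; split; last by move=> _ [s [_ Bs] <-].
  by move=> b Bb; have [s Vs qs] := sBV b Bb; exists s; rewrite /preimage /= ?qs.
rewrite preimage_image_rel; apply: continuous_compact.
  exact: continuous_subspaceT p_etale.2.1.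
exact: phi_proper (compact_lift oV injV opmV cB sBV).
Qed.

End RelationalCovering.

Theorem lemma3p10 (E X F Y : topologicalType) (p : E -> X) (q : F -> Y)
  (phi : E -> set F) (phibar : X -> Y) :
  boolean_space X -> boolean_space Y ->
  etale p -> etale q ->
  relational_morphism p q phi phibar ->
  rel_locally_injective p phi ->
  rel_locally_surjective p q phi phibar ->
  rel_continuous phi -> rel_proper phi ->
  boolset_morphism p q (fun x : set F => rel_preimage phi x)
                       (fun U : set Y => phibar @^-1` U).
Proof.
move=> _ bY pet qet rm linj lsurj rc rp.
have phibar_cont := rel_covering_base_continuous rm lsurj pet qet rc.
split.
- by move=> x; exact: sections_star_rel_preimage rm linj x rc rp.
- move=> U [oU cU]; split; first exact: (continuousP _).1 phibar_cont U oU.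
  apply: compact_preimage_locally_compact bY.1 phibar_cont _ cU => y.
  exact: rel_covering_base_locally_proper rm lsurj pet qet rp y bY.
- split.
  + by rewrite preimage_set0.
  + by move=> U V _ _; rewrite preimage_setU.
  + by move=> U V _ _; rewrite preimage_setI.
  + by move=> U V _ _; rewrite !setDE preimage_setI preimage_setC.
- by move=> x _; rewrite (preimage_image_rel rm lsurj).
- by move=> A B x _ _ _ _ _; exact: rel_preimage_restr rm B x.
Qed.
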